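(* Let $X\in\mathbb{R}^{m\times d}$ be the matrix whose rows are $x_1,\dots,x_m\in\mathbb{R}^d$, and let $\gamma>0$. The set $\{x_1,\dots,x_m\}$ is $\gamma$-shattered at the origin by $\mathcal{W}$ if and only if $XX^T$ is invertible and $y^T(XX^T)^{-1}y\le\gamma^{-2}$ for all $y\in\{\pm1\}^m$.
   Context: $\mathcal{W}=\{x\mapsto\langle w,x\rangle\mid w\in\mathbb{R}^d,\|w\|\le1\}$. A set $\{x_1,\dots,x_m\}$ is $\gamma$-shattered at the origin by $\mathcal{W}$ if for every $y\in\{\pm1\}^m$ there is $w$ with $\|w\|\le1$ and $y[i]\langle w,x_i\rangle\ge\gamma$ for all $i\in[m]$. *)

(* R is an arbitrary real closed field (covers the reals). *)
From HB Require Import structures.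
From mathcomp Require Import all_boot all_order all_algebra.
Set Implicit Arguments. Unset Strict Implicit. Unset Printing Implicit Defensive.
Import Order.TTheory GRing.Theory Num.Theory.
Local Open Scope ring_scope.

Definition inner (R : rcfType) (d : nat) (w x : 'rV[R]_d) : R :=
  \sum_(j < d) w 0 j * x 0 j.

Definition vnorm (R : rcfType) (d : nat) (w : 'rV[R]_d) : R :=
  Num.sqrt (\sum_(j < d) w 0 j ^+ 2).

Definition sign_vec (R : rcfType) (m : nat) (y : 'I_m -> R) : Prop :=
  forall i, y i = 1 \/ y i = -1.

(* {x_1,...,x_m} is gamma-shattered at the origin by W = {x |-> <w,x> : ||w|| <= 1} *)
Definition shattered_at_origin (R : rcfType) (m d : nat)
    (x : 'I_m -> 'rV[R]_d) (gamma : R) : Prop :=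
  forall y : 'I_m -> R, sign_vec y ->
    exists w : 'rV[R]_d, vnorm w <= 1 /\ forall i, gamma <= y i * inner w (x i).

From HB Require Import structures.
From mathcomp Require Import all_boot all_order all_algebra.
From mathcomp Require Import ring lra.
Import Order.TTheory GRing.Theory Num.Theory.
Local Open Scope ring_scope.

(* Let G = X X^T be the Gram matrix of the rows x_1, ..., x_m of X and, for a
   sign vector y, let Q(y) = y^T G^-1 y.  The key object is the row
   dual_row y = y^T G^-1 X, the minimum-norm w with X w^T = y, whose squared
   norm is exactly Q(y).
   - If G is invertible and gamma^2 Q(y) <= 1 for every sign vector y, then
     w = gamma dual_row y has norm at most 1 and margins y_i <w, x_i> = gamma.
   - If the points are gamma-shattered, G is invertible: a kernel row c of G
     is a kernel row of X, and shattering the sign pattern of c would make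
     0 = c X w^T >= gamma sum_i |c_i|.  For the bound, a maximiser ys of Q
     over sign vectors is "aligned" (ys_i (G^-1 ys)_i >= 0, as flipping one
     sign cannot increase Q), so a w shattering ys has
     <w, dual_row ys> >= gamma Q(ys), and Cauchy-Schwarz gives gamma^2 Q(ys) <= 1.
   The file first develops identities on row vectors and quadratic forms, then
   the dual row, then the order-theoretic facts, and finally the two directions. *)

Section RowProducts.
Context {R : comPzRingType}.

Lemma row_mul_sym {n} (u v : 'rV[R]_n) : u *m v^T = v *m u^T.
Proof.
by apply/matrixP => i j; rewrite !ord1 !mxE; apply: eq_bigr => k _; rewrite !mxE mulrC.
Qed.

Lemma gram_row_subZ {n} (w z : 'rV[R]_n) (c : R) :
  ((w - c *: z) *m (w - c *: z)^T) 0 0 =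
  (w *m w^T) 0 0 - 2 * c * (w *m z^T) 0 0 + c ^+ 2 * (z *m z^T) 0 0.
Proof.
have -> : (w - c *: z)^T = w^T - c *: z^T by apply/matrixP => i j; rewrite !mxE.
rewrite mulmxBr !mulmxBl -!scalemxAl -!scalemxAr (row_mul_sym z w) !mxE; ring.
Qed.

Lemma qform_sub_delta {m} (A : 'M[R]_m) (y : 'cV[R]_m) i (c : R) : A^T = A ->
  let y' := y - c *: delta_mx i 0 in
  (y'^T *m A *m y') 0 0 =
  (y^T *m A *m y) 0 0 - 2 * c * (A *m y) i 0 + c ^+ 2 * A i i.
Proof.
move=> symA y'; set e : 'cV[R]_m := delta_mx i 0.
have eT : y'^T = y^T - c *: e^T by apply/matrixP => a b; rewrite !mxE.
have eAy : (e^T *m A *m y) 0 0 = (A *m y) i 0.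
  by rewrite trmx_delta -mulmxA -rowE mxE.
have eyA : (y^T *m A *m e) 0 0 = (A *m y) i 0.
  transitivity ((y^T *m A *m e)^T 0 0); first by rewrite [RHS]mxE.
  by rewrite -eAy !trmx_mul trmxK symA mulmxA.
have eAe : (e^T *m A *m e) 0 0 = A i i.
  by rewrite trmx_delta -rowE -colE !mxE.
rewrite eT mulmxBr !mulmxBl -!scalemxAl -!scalemxAr -/e.
(* The four 1 x 1 products are now treated as opaque scalars. *)
move: eAy eyA eAe.
move: (y^T *m A *m y) (e^T *m A *m y) (y^T *m A *m e) (e^T *m A *m e).
move=> Q P1 P2 P3 e1 e2 e3; rewrite ![in LHS]mxE e1 e2 e3; ring.
Qed.

End RowProducts.

Section DualRow.
Context {R : comUnitRingType} {m d : nat} (X : 'M[R]_(m, d)).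

(* For a target y, the row dual_row y = y^T (X X^T)^-1 X is the minimum-norm
   solution w of X w^T = y; it drives both directions of the theorem. *)
Definition dual_row (y : 'cV[R]_m) : 'rV[R]_d := y^T *m invmx (X *m X^T) *m X.

Lemma gram_inv_sym : (invmx (X *m X^T))^T = invmx (X *m X^T).
Proof. by rewrite trmx_inv trmx_mul trmxK. Qed.

Lemma mul_dual_row (w : 'rV[R]_d) (y : 'cV[R]_m) :
  w *m (dual_row y)^T = (X *m w^T)^T *m (invmx (X *m X^T) *m y).
Proof. by rewrite /dual_row !trmx_mul !trmxK gram_inv_sym !mulmxA. Qed.

Hypothesis unitG : X *m X^T \in unitmx.

Lemma dual_rowP (y : 'cV[R]_m) : X *m (dual_row y)^T = y.
Proof.
by rewrite /dual_row !trmx_mul !trmxK gram_inv_sym !mulmxA mulmxV // mul1mx.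
Qed.

Lemma dual_row_gram (y : 'cV[R]_m) :
  dual_row y *m (dual_row y)^T = y^T *m invmx (X *m X^T) *m y.
Proof. by rewrite {1}/dual_row -mulmxA dual_rowP. Qed.

End DualRow.

Section OrderedRows.
Context {R : realFieldType}.

Lemma gram_row_sum {n} (r : 'rV[R]_n) : (r *m r^T) 0 0 = \sum_j r 0 j ^+ 2.
Proof. by rewrite mxE; apply: eq_bigr => j _; rewrite mxE expr2. Qed.

Lemma gram_row_ge0 {n} (r : 'rV[R]_n) : 0 <= (r *m r^T) 0 0.
Proof. by rewrite gram_row_sum; apply: sumr_ge0 => j _; exact: sqr_ge0. Qed.

Lemma gram_row_eq0 {n} (r : 'rV[R]_n) : (r *m r^T) 0 0 = 0 -> r = 0.
Proof.
rewrite gram_row_sum => /eqP; rewrite psumr_eq0 => [/allP r0|j _]; last first.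
  exact: sqr_ge0.
apply/matrixP => i j; rewrite ord1 mxE.
by have /implyP/(_ isT) := r0 j (mem_index_enum _); rewrite sqrf_eq0 => /eqP.
Qed.

(* The inverse of an invertible Gram matrix has a nonnegative diagonal:
   A i i is the squared norm of dual_row e_i. *)
Lemma gram_inv_diag_ge0 {m d} (X : 'M[R]_(m, d)) i :
  X *m X^T \in unitmx -> 0 <= invmx (X *m X^T) i i.
Proof.
move=> unitG; set e : 'cV[R]_m := delta_mx i 0.
have -> : invmx (X *m X^T) i i = (e^T *m invmx (X *m X^T) *m e) 0 0.
  by rewrite trmx_delta -rowE -colE !mxE.
by rewrite -dual_row_gram //; exact: gram_row_ge0.
Qed.

(* Cauchy-Schwarz in the form needed below: if |w| <= 1 and
   <w, z> >= gamma |z|^2 with gamma > 0, then gamma^2 |z|^2 <= 1.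
   It follows from 0 <= |w - gamma z|^2. *)
Lemma corr_bound {n} (w z : 'rV[R]_n) (gamma : R) : 0 < gamma ->
  (w *m w^T) 0 0 <= 1 -> gamma * (z *m z^T) 0 0 <= (w *m z^T) 0 0 ->
  gamma ^+ 2 * (z *m z^T) 0 0 <= 1.
Proof.
move=> gamma_gt0 w_le1 corr.
have := gram_row_ge0 (w - gamma *: z); rewrite gram_row_subZ.
have := ler_wpM2l (ltW gamma_gt0) corr; rewrite mulrA -expr2.
lra.
Qed.

Lemma le_invsqr (gamma q : R) : 0 < gamma -> (q <= gamma ^- 2) = (gamma ^+ 2 * q <= 1).
Proof.
move=> gamma_gt0; have g2_gt0 : 0 < gamma ^+ 2 by rewrite exprn_gt0.
by rewrite -(ler_pM2l g2_gt0) mulrV // unitfE gt_eqF.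
Qed.

End OrderedRows.

Section SignVectors.
Context {R : rcfType}.

Lemma inner_row {m d} (X : 'M[R]_(m, d)) (w : 'rV[R]_d) i :
  inner w (row i X) = (X *m w^T) i 0.
Proof. by rewrite /inner mxE; apply: eq_bigr => j _; rewrite !mxE mulrC. Qed.

Lemma vnorm_le1 {d} (w : 'rV[R]_d) : (vnorm w <= 1) = ((w *m w^T) 0 0 <= 1).
Proof. by rewrite /vnorm gram_row_sum -{1}sqrtr1 ler_sqrt. Qed.

Lemma sign_vec_flip {m} (y : 'cV[R]_m) i :
  sign_vec (fun j => y j 0) ->
  sign_vec (fun j => (y - (2 * y i 0) *: delta_mx i 0) j 0).
Proof.
move=> sy j; rewrite !mxE.
case: (eqVneq j i) => [->|_] /=; last by rewrite mulr0 subr0.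
by case: (sy i) => ->; [right|left]; ring.
Qed.

Lemma sign_vec_argmax {m} (F : 'cV[R]_m -> R) :
  exists2 y : 'cV[R]_m, sign_vec (fun i => y i 0) &
    forall y' : 'cV[R]_m, sign_vec (fun i => y' i 0) -> F y' <= F y.
Proof.
pose sv (b : {ffun 'I_m -> bool}) : 'cV[R]_m := \col_i (if b i then 1 else -1).
have sv_sign b : sign_vec (fun i => sv b i 0).
  by move=> i; rewrite mxE; case: (b i); [left|right].
have sv_onto (y : 'cV[R]_m) :
    sign_vec (fun i => y i 0) -> y = sv [ffun i => y i 0 == 1].
  have m1_neq1 : ((-1 : R) == 1) = false by apply: lt_eqF; lra.
  move=> sy; apply/matrixP => i j; rewrite ord1 !mxE ffunE.
  by case: (sy i) => ->; rewrite ?eqxx ?m1_neq1.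
have [b _ bmax] := @arg_maxP _ R _ [ffun => true] predT (F \o sv) isT.
by exists (sv b) => // y' /sv_onto ->; exact: bmax.
Qed.

(* At a maximiser y of a symmetric quadratic form with nonnegative diagonal
   over the sign vectors, every coordinate of A y has the sign of y: flipping
   y_i changes the form by 4 (A_ii - y_i (A y)_i), which must be <= 0. *)
Lemma argmax_sign_aligned {m} (A : 'M[R]_m) (y : 'cV[R]_m) :
  A^T = A -> (forall i, 0 <= A i i) ->
  sign_vec (fun i => y i 0) ->
  (forall y' : 'cV[R]_m, sign_vec (fun i => y' i 0) ->
     (y'^T *m A *m y') 0 0 <= (y^T *m A *m y) 0 0) ->
  forall i, 0 <= y i 0 * (A *m y) i 0.
Proof.
move=> symA diag_ge0 sy ymax i.
have := ymax _ (sign_vec_flip y i sy); rewrite qform_sub_delta //.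
have yi2 : (2 * y i 0) ^+ 2 = 4 by case: (sy i) => ->; ring.
rewrite yi2; have := diag_ge0 i; lra.
Qed.

(* Shattering forces X X^T to be invertible: a kernel row c of X X^T is a
   kernel row of X, and a w shattering the sign pattern of c would give
   0 = c X w^T >= gamma sum_i |c_i|. *)
Lemma shattered_gram_unit {m d} {X : 'M[R]_(m, d)} {gamma : R} :
  0 < gamma -> shattered_at_origin (fun i => row i X) gamma ->
  X *m X^T \in unitmx.
Proof.
move=> gamma_gt0 shX; rewrite unitmxE unitfE; apply/negP => /det0P [c c_neq0 cG].
have cX : c *m X = 0.
  by apply: gram_row_eq0; rewrite trmx_mul !mulmxA -(mulmxA c) cG !mul0mx mxE.
pose s i : R := if c 0 i < 0 then -1 else 1.
have [|w [_ margins]] := shX s; first by move=> i; rewrite /s; case: ifP; [right|left].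
have term i : gamma * `|c 0 i| <= c 0 i * (X *m w^T) i 0.
  have := margins i; rewrite inner_row /s.
  case: ifP => [c_lt0|c_ge0]; first by rewrite ltr0_norm //; nra.
  by rewrite ger0_norm ?leNgt ?c_ge0 //; nra.
have [i0 ci0] : exists i, c 0 i != 0.
  apply/existsP; apply: contraR c_neq0 => /existsPn c0.
  by apply/eqP/matrixP => a b; rewrite ord1 mxE; apply/eqP/negbNE/c0.
have sum_pos : 0 < \sum_i gamma * `|c 0 i|.
  rewrite (bigD1 i0) //= ltr_pwDl ?mulr_gt0 ?normr_gt0 //.
  by apply: sumr_ge0 => i _; rewrite mulr_ge0 // ltW.
have sum0 : \sum_i c 0 i * (X *m w^T) i 0 = 0.
  transitivity ((c *m X *m w^T) 0 0); first by rewrite -mulmxA [RHS]mxE.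
  by rewrite cX mul0mx mxE.
have : \sum_i gamma * `|c 0 i| <= \sum_i c 0 i * (X *m w^T) i 0.
  by apply: ler_sum => i _; exact: term.
by rewrite sum0 leNgt sum_pos.
Qed.

(* Shattering bounds the quadratic form: take a maximiser ys of
   Q(y) = y^T (X X^T)^-1 y over sign vectors and a w shattering ys; the
   alignment of ys with (X X^T)^-1 ys gives <w, dual_row ys> >= gamma Q(ys),
   while |dual_row ys|^2 = Q(ys), so Cauchy-Schwarz yields gamma^2 Q(ys) <= 1. *)
Lemma shattered_gram_bound {m d} {X : 'M[R]_(m, d)} {gamma : R} :
  0 < gamma -> shattered_at_origin (fun i => row i X) gamma ->
  X *m X^T \in unitmx ->
  forall y : 'cV[R]_m, sign_vec (fun i => y i 0) ->
    (y^T *m invmx (X *m X^T) *m y) 0 0 <= gamma ^- 2.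
Proof.
move=> gamma_gt0 shX unitG; set A := invmx (X *m X^T).
have [ys sys ysmax] := sign_vec_argmax (fun y => (y^T *m A *m y) 0 0).
suff Qys : (ys^T *m A *m ys) 0 0 <= gamma ^- 2.
  by move=> y sy; exact: le_trans (ysmax _ sy) Qys.
have aligned := argmax_sign_aligned A ys (gram_inv_sym X)
  (fun i => gram_inv_diag_ge0 X i unitG) sys ysmax.
have [w [w_le1 margins]] := shX _ sys.
have Q_sum : (ys^T *m A *m ys) 0 0 = \sum_k ys k 0 * (A *m ys) k 0.
  by rewrite -mulmxA mxE; apply: eq_bigr => k _; rewrite mxE.
have corr : gamma * (ys^T *m A *m ys) 0 0 <= (w *m (dual_row X ys)^T) 0 0.
  rewrite mul_dual_row -/A Q_sum mulr_sumr mxE; apply: ler_sum => k _.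
  rewrite [X in _ <= X * _]mxE; have := margins k; rewrite inner_row /= => margin.
  have ys2 : ys k 0 * ys k 0 = 1 by case: (sys k) => ->; ring.
  rewrite -[X in _ <= X]mul1r -ys2 mulrACA.
  by apply: ler_wpM2r; [exact: aligned | exact: margin].
rewrite le_invsqr // -dual_row_gram //.
apply: (corr_bound w _ _ gamma_gt0); first by rewrite -vnorm_le1.
by rewrite dual_row_gram.
Qed.

(* Conversely, the bound lets w = gamma dual_row y shatter y: it realises
   the margins X w^T = gamma y exactly, with |w|^2 = gamma^2 Q(y) <= 1. *)
Lemma gram_bound_shattered {m d} {X : 'M[R]_(m, d)} {gamma : R} :
  0 < gamma -> X *m X^T \in unitmx ->
  (forall y : 'cV[R]_m, sign_vec (fun i => y i 0) ->
    (y^T *m invmx (X *m X^T) *m y) 0 0 <= gamma ^- 2) ->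
  shattered_at_origin (fun i => row i X) gamma.
Proof.
move=> gamma_gt0 unitG Qbound y sy.
pose yc : 'cV[R]_m := \col_i y i.
have syc : sign_vec (fun i => yc i 0) by move=> i; rewrite mxE.
pose z := dual_row X yc.
exists (gamma *: z); split.
  rewrite vnorm_le1 [X in _ *m X]linearZ /= -scalemxAl -scalemxAr scalerA.
  by rewrite [X in X <= _]mxE dual_row_gram // -expr2 -le_invsqr // Qbound.
move=> i; rewrite inner_row linearZ /= -scalemxAr dual_rowP // !mxE.
by case: (sy i) => ->; lra.
Qed.

End SignVectors.

Theorem mainTheorem6 (R : rcfType) (m d : nat) (X : 'M[R]_(m, d))
    (gamma : R) (hgamma : 0 < gamma) :
  shattered_at_origin (fun i : 'I_m => row i X) gamma <->
  (X *m X^T \in unitmx /\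
   forall y : 'cV[R]_m, sign_vec (fun i => y i 0) ->
     (y^T *m invmx (X *m X^T) *m y) 0 0 <= gamma ^- 2).
Proof.
split=> [shX | [unitG Qbound]]; last exact: gram_bound_shattered.
have unitG := shattered_gram_unit hgamma shX.
by split=> //; exact: shattered_gram_bound.
Qed.
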